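(* In the discrete torus model with frame group $\mathbb{Z}_2\times\mathbb{Z}_2$ and its universal calculus (context), the torsion-free and cotorsion-free spin connections are exactly \[A_{\overline{10}}=\alpha e_1-(\delta+\tfrac{s_2}{2})e_2,\quad A_{\overline{01}}=-(\gamma+\tfrac{s_1}{2})e_1+\beta e_2,\quad A_{\overline{11}}=\gamma e_1+\delta e_2\] for arbitrary functions $\alpha,\beta,\gamma,\delta$, where $s_1=\bar\partial^2\Theta_1$, $s_2=\bar\partial^1\Theta_2$. With $a=\alpha+\gamma$, $b=\beta+\delta$ the covariant derivative is $\nabla e_1=2a\,e_1\otimes e_1-s_2\,e_2\otimes e_1$, $\nabla e_2=-s_1\,e_1\otimes e_2+2b\,e_2\otimes e_2$.
   Context: Discrete torus model: $\Sigma=\mathbb{Z}_2\times\mathbb{Z}_2$, $x\to y$ iff $y-x\in\{(1,0),(0,1)\}$; diagonal zweibein $e_{1,x,x+(1,0)}=\Theta_1(x)^{-1}$, $e_{2,x,x+(0,1)}=\Theta_2(x)^{-1}$, $\Theta_a$ nowhere-vanishing with $\Theta_1R_1\Theta_2=\Theta_2R_2\Theta_1$; $R_1f(x)=f(x+(1,0))$, $R_2f(x)=f(x+(0,1))$, $\bar\partial^a=R_a-\mathrm{id}$; $e_af=R_a(f)e_a$, $\mathrm{d}f=\sum_a(\bar\partial^af)\Theta_ae_a$; two-forms $e_1\wedge e_2=-e_2\wedge e_1$, $e_a\wedge e_a=0$; $\mathrm{d}e_1=(\bar\partial^1\Theta_2)e_1\wedge e_2$, $\mathrm{d}e_2=-(\bar\partial^2\Theta_1)e_1\wedge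 e_2$. Frame group $\mathbb{Z}_2\times\mathbb{Z}_2=\{\overline{00},\overline{10},\overline{01},\overline{11}\}$ with universal calculus $\mathcal C=\{\overline{10},\overline{01},\overline{11}\}$, $f^i=i-\overline{00}$ acting by $f^{\overline{10}}\triangleright e_1=-2e_1$, $f^{\overline{10}}\triangleright e_2=0$, $f^{\overline{01}}\triangleright e_1=0$, $f^{\overline{01}}\triangleright e_2=-2e_2$, $f^{\overline{11}}\triangleright e_a=-2e_a$. Spin connection: 1-forms $A_i$, $i\in\mathcal C$. Torsion-free: $\mathrm{d}e_a+\sum_iA_i\wedge(f^i\triangleright e_a)=0$; cotorsion-free: $\mathrm{d}e_a+\sum_i(f^i\triangleright e_a)\wedge A_i=0$ (all elements have order 2). Covariant derivative $\nabla(\sum\alpha^ae_a)=\sum\mathrm{d}\alpha^a\otimes e_a-\sum_{i,a}\alpha^aA_i\otimes f^i\triangleright e_a$. *)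

From HB Require Import structures.
From mathcomp Require Import all_boot all_algebra.
Set Implicit Arguments. Unset Strict Implicit. Unset Printing Implicit Defensive.
Import GRing.Theory.
Local Open Scope ring_scope.

Definition Sigma := ('Z_2 * 'Z_2)%type.

Inductive idx := I1 | I2.

(* Elements of the universal calculus C = {10, 01, 11} of Z_2 x Z_2. *)
Inductive cgen := g10 | g01 | g11.

Section Model.
Variable K : fieldType.

Definition R (a : idx) (f : Sigma -> K) : Sigma -> K :=
  fun x => match a with
           | I1 => f (x.1 + 1, x.2)
           | I2 => f (x.1, x.2 + 1)
           end.

Definition dbar (a : idx) (f : Sigma -> K) : Sigma -> K := fun x => R a f x - f x.

(* One-forms: left-module combinations sum_a u a * e_a (u a = coefficient of e_a). *)
Definition oneform := idx -> Sigma -> K.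
(* Two-forms: g * (e_1 /\ e_2). *)
Definition twoform := Sigma -> K.
(* Elements of Omega^1 (x)_A Omega^1: t b c = coefficient of e_b (x) e_c. *)
Definition tensor2 := idx -> idx -> Sigma -> K.

Definition lc (f g : Sigma -> K) : oneform :=
  fun b => match b with I1 => f | I2 => g end.

Definition e (a : idx) : oneform :=
  fun b _ => match a, b with I1, I1 | I2, I2 => 1 | _, _ => 0 end.

Definition d0 (Theta : idx -> Sigma -> K) (f : Sigma -> K) : oneform :=
  fun a x => dbar a f x * Theta a x.

(* Wedge product, using e_a f = R_a(f) e_a, e_a/\e_a = 0, e_2/\e_1 = - e_1/\e_2:
   (u^1 e_1 + u^2 e_2) /\ (v^1 e_1 + v^2 e_2) = (u^1 R_1(v^2) - u^2 R_2(v^1)) e_1/\e_2. *)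
Definition wedge (u v : oneform) : twoform :=
  fun x => u I1 x * R I1 (v I2) x - u I2 x * R I2 (v I1) x.

Definition de (Theta : idx -> Sigma -> K) (a : idx) : twoform :=
  fun x => match a with
           | I1 => dbar I1 (Theta I2) x
           | I2 => - dbar I2 (Theta I1) x
           end.

(* f^i |> e_a = fcoef i a * e_a *)
Definition fcoef (i : cgen) (a : idx) : K :=
  match i, a with
  | g10, I1 => -2 | g10, I2 => 0
  | g01, I1 => 0  | g01, I2 => -2
  | g11, _ => -2
  end.

Definition act (i : cgen) (a : idx) : oneform :=
  fun b x => fcoef i a * e a b x.

Definition sumC (F : cgen -> K) : K := F g10 + F g01 + F g11.

Definition torsion_free (Theta : idx -> Sigma -> K) (A : cgen -> oneform) : Prop :=
  forall a x, de Theta a x + sumC (fun i => wedge (A i) (act i a) x) = 0.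

Definition cotorsion_free (Theta : idx -> Sigma -> K) (A : cgen -> oneform) : Prop :=
  forall a x, de Theta a x + sumC (fun i => wedge (act i a) (A i) x) = 0.

(* nabla(sum_a u^a e_a) = sum_a du^a (x) e_a - sum_{i,a} u^a A_i (x) f^i |> e_a;
   coefficient of e_b (x) e_c. *)
Definition nabla (Theta : idx -> Sigma -> K) (A : cgen -> oneform) (u : oneform)
  : tensor2 :=
  fun b c x => d0 Theta (u c) b x - sumC (fun i => u c x * A i b x * fcoef i c).

Definition s1 (Theta : idx -> Sigma -> K) := dbar I2 (Theta I1).
Definition s2 (Theta : idx -> Sigma -> K) := dbar I1 (Theta I2).

Definition spin_sol (Theta : idx -> Sigma -> K) (al be ga dl : Sigma -> K)
  : cgen -> oneform :=
  fun i => match i with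
   | g10 => lc al (fun x => - (dl x + s2 Theta x / 2))
   | g01 => lc (fun x => - (ga x + s1 Theta x / 2)) be
   | g11 => lc ga dl
   end.

Definition tc (t11 t12 t21 t22 : Sigma -> K) : tensor2 :=
  fun b c => match b, c with
             | I1, I1 => t11 | I1, I2 => t12 | I2, I1 => t21 | I2, I2 => t22 end.

End Model.

(* On Z_2 x Z_2 every shift R_a is an involution, so R_a (dbar^a f) = - dbar^a f.
   The torsion equations only involve the e_2-parts of A_10, A_11 and the e_1-parts
   of A_01, A_11, and read s_2 + 2 (A_10 + A_11)_2 = 0, s_1 + 2 (A_01 + A_11)_1 = 0;
   solving them gives the family, with alpha, beta, gamma, delta the remaining
   components.  The cotorsion equations are the torsion equations shifted by R_a, so
   by the anti-invariance of s_a they add nothing.  On the frame e_a, nabla only sees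
   the connection, and its coefficients are read off directly. *)
From mathcomp Require Import all_boot all_algebra ring.
From Stdlib Require Import FunctionalExtensionality.
Import GRing.Theory.
Local Open Scope ring_scope.

Lemma addrZ2_11 (z : 'Z_2) : z + 1 + 1 = z.
Proof. by case: z => [[|[|]]] //= ?; apply/val_inj. Qed.

Section DiscreteTorus.
Variables (K : fieldType) (Theta : idx -> Sigma -> K).
Implicit Types (f : Sigma -> K) (A : cgen -> oneform K).

Lemma RK a f x : R a (R a f) x = f x.
Proof. by case: a; case: x => x1 x2; rewrite /R /= addrZ2_11. Qed.

Lemma R_dbar a f x : R a (dbar a f) x = - dbar a f x.
Proof.
have -> : R a (dbar a f) x = R a (R a f) x - R a f x by case: a.
by rewrite RK opprB.
Qed.

Lemma torsion_I1 A x :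
  de Theta I1 x + sumC (fun i => wedge (A i) (act K i I1) x)
  = s2 Theta x + 2 * (A g10 I2 x + A g11 I2 x).
Proof. by rewrite /de /sumC /wedge /act /e /fcoef /R /s2 /=; ring. Qed.

Lemma torsion_I2 A x :
  de Theta I2 x + sumC (fun i => wedge (A i) (act K i I2) x)
  = - (s1 Theta x + 2 * (A g01 I1 x + A g11 I1 x)).
Proof. by rewrite /de /sumC /wedge /act /e /fcoef /R /s1 /=; ring. Qed.

Lemma cotorsion_I1 A x :
  de Theta I1 x + sumC (fun i => wedge (act K i I1) (A i) x)
  = s2 Theta x - 2 * R I1 (fun y => A g10 I2 y + A g11 I2 y) x.
Proof. by rewrite /de /sumC /wedge /act /e /fcoef /R /s2 /=; ring. Qed.

Lemma cotorsion_I2 A x :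
  de Theta I2 x + sumC (fun i => wedge (act K i I2) (A i) x)
  = - (s1 Theta x - 2 * R I2 (fun y => A g01 I1 y + A g11 I1 y) x).
Proof. by rewrite /de /sumC /wedge /act /e /fcoef /R /s1 /=; ring. Qed.

Lemma torsion_freeE A :
  torsion_free Theta A <->
  forall x, s2 Theta x + 2 * (A g10 I2 x + A g11 I2 x) = 0
         /\ s1 Theta x + 2 * (A g01 I1 x + A g11 I1 x) = 0.
Proof.
split=> [T x | T [] x]; rewrite ?torsion_I1 ?torsion_I2.
- by split; [rewrite -torsion_I1 T | rewrite -[LHS]opprK -torsion_I2 T oppr0].
- by rewrite (proj1 (T x)).
- by rewrite (proj2 (T x)) oppr0.
Qed.

Lemma cotorsion_free_of_torsion_free A :
  torsion_free Theta A -> cotorsion_free Theta A.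
Proof.
rewrite torsion_freeE => T [] x; rewrite ?cotorsion_I1 ?cotorsion_I2.
- have shifted : R I1 (dbar I1 (Theta I2)) x
                 + 2 * R I1 (fun y => A g10 I2 y + A g11 I2 y) x = 0.
    exact: proj1 (T (x.1 + 1, x.2)).
  by move: shifted; rewrite R_dbar addrC -opprB => /eqP; rewrite oppr_eq0 => /eqP.
- have shifted : R I2 (dbar I2 (Theta I1)) x
                 + 2 * R I2 (fun y => A g01 I1 y + A g11 I1 y) x = 0.
    exact: proj2 (T (x.1, x.2 + 1)).
  by rewrite R_dbar addrC -opprB in shifted.
Qed.

Hypothesis two_neq0 : (2 : K) != 0.

Lemma add_double_eq0 (s a b : K) : s + 2 * (a + b) = 0 <-> a = - (b + s / 2).
Proof.
split=> [sab0 | ->]; last by field.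
have -> : s = - (2 * (a + b)) by rewrite -(addr0_eq sab0) opprK.
by field.
Qed.

Lemma torsion_freeP A :
  torsion_free Theta A <->
  (forall x, A g10 I2 x = - (A g11 I2 x + s2 Theta x / 2)) /\
  (forall x, A g01 I1 x = - (A g11 I1 x + s1 Theta x / 2)).
Proof.
rewrite torsion_freeE; split=> [T | [T1 T2] x].
  by split=> x; apply/add_double_eq0; case: (T x).
by split; apply/add_double_eq0.
Qed.

Lemma torsion_free_spin_sol A :
  torsion_free Theta A <->
  exists al be ga dl : Sigma -> K, A = spin_sol Theta al be ga dl.
Proof.
rewrite torsion_freeP; split=> [[T1 T2] | [al [be [ga [dl ->]]]]]; last by [].
exists (A g10 I1), (A g01 I2), (A g11 I1), (A g11 I2).
apply: functional_extensionality => i; apply: functional_extensionality => c.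
apply: functional_extensionality => x.
by case: i; case: c => //=; rewrite ?T1 ?T2.
Qed.

Lemma nabla_frame A a b c x :
  nabla Theta A (e K a) b c x = - sumC (fun i => e K a c x * A i b x * fcoef K i c).
Proof.
rewrite /nabla /d0.
have -> : dbar b (e K a c) x = 0 by case: a b c => [] [] []; rewrite /dbar /R /= subrr.
by rewrite mul0r sub0r.
Qed.

Lemma nabla_spin_sol_e1 al be ga dl :
  nabla Theta (spin_sol Theta al be ga dl) (e K I1)
  = tc (fun x => 2 * (al x + ga x)) (fun _ => 0) (fun x => - s2 Theta x) (fun _ => 0).
Proof.
apply: functional_extensionality => b; apply: functional_extensionality => c.
apply: functional_extensionality => x.
by rewrite nabla_frame; case: b; case: c; rewrite /sumC /fcoef /=; field.
Qed.

Lemma nabla_spin_sol_e2 al be ga dl :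
  nabla Theta (spin_sol Theta al be ga dl) (e K I2)
  = tc (fun _ => 0) (fun x => - s1 Theta x) (fun _ => 0) (fun x => 2 * (be x + dl x)).
Proof.
apply: functional_extensionality => b; apply: functional_extensionality => c.
apply: functional_extensionality => x.
by rewrite nabla_frame; case: b; case: c; rewrite /sumC /fcoef /=; field.
Qed.

End DiscreteTorus.

Theorem proposition4p8 (K : fieldType) (Theta : idx -> Sigma -> K)
  (char2 : (2 : K) != 0)
  (Theta_nz : forall a x, Theta a x != 0)
  (Theta_compat : forall x,
      Theta I1 x * R I1 (Theta I2) x = Theta I2 x * R I2 (Theta I1) x) :
  (forall A : cgen -> oneform K,
      torsion_free Theta A /\ cotorsion_free Theta A <->
      exists al be ga dl : Sigma -> K, A = spin_sol Theta al be ga dl)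
  /\
  (forall al be ga dl : Sigma -> K,
      let A := spin_sol Theta al be ga dl in
      let a := fun x => al x + ga x in
      let b := fun x => be x + dl x in
      nabla Theta A (e K I1)
        = tc (fun x => 2 * a x) (fun _ => 0) (fun x => - s2 Theta x) (fun _ => 0)
      /\
      nabla Theta A (e K I2)
        = tc (fun _ => 0) (fun x => - s1 Theta x) (fun _ => 0) (fun x => 2 * b x)).
Proof.
split=> [A | al be ga dl /=].
  rewrite -torsion_free_spin_sol //.
  by split=> [[] | T] //; split=> //; apply: cotorsion_free_of_torsion_free.
by split; [apply: nabla_spin_sol_e1 | apply: nabla_spin_sol_e2].
Qed.
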